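(* Let $z\in\mathbb{E}^d$ and $x\in\mathbb{E}^d\setminus\mathbf{B}[z]$. Let $C$ be a circle of radius at least one and $\mu$ an arc of $C$ which is shorter than a quarter circle, with end points $x$ and $y$, oriented from $x$ toward $y$. Assume that the angle between the vector $x-z$ and the (oriented) tangent direction of $\mu$ at $x$ is at most a right angle. Then $y\notin\mathbf{B}[z]$.
   Context: $\mathbf{B}[z]$ denotes the closed unit ball centered at $z$. An arc is a connected subset of a circle containing no pair of antipodal points of the circle. *)

From HB Require Import structures.
From mathcomp Require Import all_boot all_order all_algebra.
From mathcomp Require Import all_classical all_reals all_analysis.
Set Implicit Arguments. Unset Strict Implicit. Unset Printing Implicit Defensive.
Import Order.TTheory GRing.Theory Num.Theory.
Local Open Scope ring_scope.

Definition dotp (R : realType) (d : nat) (u v : 'rV[R]_d) : R :=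
  \sum_(i < d) u ord0 i * v ord0 i.

Definition enorm (R : realType) (d : nat) (u : 'rV[R]_d) : R :=
  Num.sqrt (dotp u u).

Definition closed_unit_ball (R : realType) (d : nat) (z : 'rV[R]_d) :
  set 'rV[R]_d := [set x | enorm (x - z) <= 1].

(* Point of the circle with center c, radius r, in the plane spanned by the
   orthonormal pair (u, v), at angle t. *)
Definition circ_pt (R : realType) (d : nat) (c u v : 'rV[R]_d) (r t : R) :
  'rV[R]_d := c + (r * cos t) *: u + (r * sin t) *: v.

From HB Require Import structures.
From mathcomp Require Import all_boot all_order all_algebra.
From mathcomp Require Import all_classical all_reals all_analysis.
From mathcomp Require Import ring lra.
Import Order.TTheory GRing.Theory Num.Theory.
Local Open Scope ring_scope.

(* With P := c - z, the squared distance from z to the point of the circle at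
   angle t is |P|^2 + 2 r (cos t <P,u> + sin t <P,v>) + r^2.  The hypothesis on
   x says |P|^2 + 2 r <P,u> + r^2 > 1, and the tangent condition says <P,v> >= 0.
   If <P,u> <= 0, moving from angle 0 to theta in (0, pi/2) can only increase
   both angle terms; if <P,u> > 0, the distance squared exceeds r^2 >= 1. *)

Section DotProduct.
Context {R : realType} {d : nat}.
Implicit Types (a b w z x P u v : 'rV[R]_d).

Lemma dotpDl a b w : dotp (a + b) w = dotp a w + dotp b w.
Proof. by rewrite /dotp -big_split; apply: eq_bigr => i _; rewrite !mxE mulrDl. Qed.

Lemma dotpZl k a w : dotp (k *: a) w = k * dotp a w.
Proof. by rewrite /dotp mulr_sumr; apply: eq_bigr => i _; rewrite !mxE mulrA. Qed.

Lemma dotpC a w : dotp a w = dotp w a.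
Proof. by apply: eq_bigr => i _; rewrite mulrC. Qed.

Lemma dotpDr a b w : dotp w (a + b) = dotp w a + dotp w b.
Proof. by rewrite dotpC dotpDl !(dotpC w). Qed.

Lemma dotpZr k a w : dotp w (k *: a) = k * dotp w a.
Proof. by rewrite dotpC dotpZl dotpC. Qed.

Lemma dotpp_ge0 a : 0 <= dotp a a.
Proof. by apply: sumr_ge0 => i _; rewrite -expr2 sqr_ge0. Qed.

Lemma closed_unit_ballE z x : closed_unit_ball z x <-> dotp (x - z) (x - z) <= 1.
Proof.
rewrite /closed_unit_ball /enorm /=.
by rewrite -[X in _ <= X]sqrtr1 ler_sqrt // ?dotpp_ge0.
Qed.

Lemma dotp_orthonormal_combination P u v (a b : R) :
  dotp u u = 1 -> dotp v v = 1 -> dotp u v = 0 ->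
  dotp (P + a *: u + b *: v) (P + a *: u + b *: v) =
  dotp P P + 2 * (a * dotp P u + b * dotp P v) + (a ^+ 2 + b ^+ 2).
Proof.
move=> uu vv uv.
rewrite !(dotpDl, dotpDr, dotpZl, dotpZr) uu vv uv (dotpC v u) uv.
by rewrite (dotpC u P) (dotpC v P); ring.
Qed.

End DotProduct.

Lemma sqdist_circ_pt (R : realType) (d : nat) (z c u v : 'rV[R]_d) (r t : R) :
  dotp u u = 1 -> dotp v v = 1 -> dotp u v = 0 ->
  dotp (circ_pt c u v r t - z) (circ_pt c u v r t - z) =
  dotp (c - z) (c - z)
  + 2 * r * (cos t * dotp (c - z) u + sin t * dotp (c - z) v) + r ^+ 2.
Proof.
move=> uu vv uv.
have -> : circ_pt c u v r t - z = (c - z) + (r * cos t) *: u + (r * sin t) *: v.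
  by rewrite /circ_pt addrAC (addrAC c).
rewrite dotp_orthonormal_combination // !exprMn -mulrDr cos2Dsin2.
by ring.
Qed.

Lemma tangent_circ_pt0 (R : realType) (d : nat) (z c u v : 'rV[R]_d) (r : R) :
  dotp u v = 0 -> dotp (circ_pt c u v r 0 - z) v = dotp (c - z) v.
Proof.
move=> uv.
rewrite /circ_pt cos0 sin0 mulr1 mulr0 scale0r addr0 addrAC.
by rewrite (dotpDl (c - z)) dotpZl uv mulr0 addr0.
Qed.

Lemma quarter_arc_sqdist_gt1 (R : realFieldType) (Q Pu Pv r C S : R) :
  0 <= Q -> 1 <= r -> 0 < C <= 1 -> 0 <= S -> 0 <= Pv ->
  1 < Q + 2 * r * Pu + r ^+ 2 ->
  1 < Q + 2 * r * (C * Pu + S * Pv) + r ^+ 2.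
Proof.
move=> Q0 r1 /andP[C0 C1] S0 Pv0 start.
have SPv0 : 0 <= r * (S * Pv) by rewrite !mulr_ge0 //; lra.
have [Pu_le0 | Pu_gt0] := lerP Pu 0.
- have : 0 <= r * ((1 - C) * - Pu) by rewrite !mulr_ge0 //; lra.
  lra.
- have : 0 < r * (C * Pu) by rewrite !mulr_gt0 //; lra.
  have : 1 <= r ^+ 2 by nra.
  lra.
Qed.

Theorem lemma1 (R : realType) (d : nat) (z x y c u v : 'rV[R]_d)
    (r theta : R) :
  ~ closed_unit_ball z x ->
  1 <= r ->
  dotp u u = 1 -> dotp v v = 1 -> dotp u v = 0 ->
  0 < theta -> theta < pi / 2 ->
  x = circ_pt c u v r 0 -> y = circ_pt c u v r theta ->
  0 <= dotp (x - z) v ->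
  ~ closed_unit_ball z y.
Proof.
move=> + r1 uu vv uv theta0 theta_lt x_def y_def.
rewrite {}x_def {}y_def => x_out tangent; move: x_out.
rewrite !closed_unit_ballE !sqdist_circ_pt // cos0 sin0 mul1r mul0r addr0.
rewrite tangent_circ_pt0 // in tangent.
move=> /negP; rewrite -ltNge => start; apply/negP; rewrite -ltNge.
apply: quarter_arc_sqdist_gt1 start; rewrite ?dotpp_ge0 //.
- rewrite cos_le1 andbT cos_gt0_pihalf // theta_lt andbT.
  by rewrite (lt_trans _ theta0) // oppr_lt0 divr_gt0 ?pi_gt0.
- by rewrite ltW // sin_gt0_pihalf // theta0.
Qed.
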